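(* Let $P=\langle \mathit{Init}(X),\mathit{Tr}(X,X'),\mathit{Bad}(X)\rangle$ be a safety problem over $\mathcal{T}$, and consider an execution of the Quic3 rules on $P$. Suppose the NewLemma rule is applied to a proof obligation $\langle m,\sigma,i+1\rangle\in\mathcal{Q}$ (with $0\le i<N$ and $\mathcal{F}(\mathit{qi}(Q_i))\wedge m'_{\mathit{sk}}$ unsatisfiable), computing $L'=\textsc{Itp}(\mathcal{F}(\mathit{qi}(Q_i)),m'_{\mathit{sk}})$ and $(\ell,\_)=\mathit{abs}(\mathit{SK},L)$, and adding $(\ell,\sigma)$ to $Q_{i+1}$. Then $$\mathcal{F}(\forall Q_i)\ \Rightarrow\ \forall(\ell').$$
   Context: $\mathcal{T}$ is the combined first-order theory of linear integer arithmetic and arrays, with sorts $\mathsf{int}$ and $\mathsf{array}$ (array indices and values have sort $\mathsf{int}$; $\mathsf{sel}$, $\mathit{store}$ are array read/write). Formulas may contain uninterpreted constants; among them are Skolem constants $\mathit{SK}=\{sk_i: i\in\mathbb{N}\}$ of sort $\mathsf{int}$. Variables of sort $\mathsf{int}$ are named $v_i$. A substitution is a partial sort-respecting map from variables to terms; $\varphi\sigma$ is its application; $\emptyset$ is the empty substitution. The Skolem substitution $\mathit{sk}$ maps $v_i\mapsto sk_i$; $L_{\mathit{sk}}$ denotes $L\,\mathit{sk}$. $\mathit{Const}(\varphi)$, $\mathit{FVars}(\varphi)$ denote uninterpreted constants and free variables; $\forall\varphi$ / $\exists\varphi$ are universal / existential closures over all free variables; $\varphi\Rightarrow\psi$ means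 $\varphi\to\psi$ is valid in $\mathcal{T}$. For a set $U$ of constants and formula $\varphi$, $\mathit{abs}(U,\varphi)=(\psi,\sigma)$: $\psi$ is obtained from $\varphi$ by replacing each constant of $U$ by a variable not free in $\varphi$, each $sk_i\in U$ being replaced by $v_i$; $\mathit{dom}(\sigma)=\mathit{FVars}(\psi)\setminus\mathit{FVars}(\varphi)$, $\psi\sigma=\varphi$, and no constant of $U$ occurs in $\psi$. For ground $\varphi$, $\exists U\cdot\varphi$ denotes $\exists\psi$ with $(\psi,\_)=\mathit{abs}(U,\varphi)$. A partial model-based projection $\textsc{pMbp}(U,\varphi,M)=(\psi,W)$ (for ground $\varphi$, $M\models\varphi$, $U\subseteq\mathit{Const}(\varphi)$) satisfies: $\psi$ is a conjunction of ground literals; $W\subseteq U$, $\mathit{Const}(\psi)\subseteq\mathit{Const}(\varphi)\setminus(U\setminus W)$; $\psi\Rightarrow\exists(U\setminus W)\cdot\varphi$; $M\models\psi$; for fixed $U,\varphi$ only finitely many values arise over all models $M$; $W$ contains no array constant. For ground $A,B$ with $A\wedge B$ unsatisfiable, $\textsc{Itp}(A,B)$ is an interpolant: a ground formula $I$ with $\mathit{Const}(I)\subseteq\mathit{Const}(A)\cap\mathit{Const}(B)$, $A\Rightarrow I$ and $I\Rightarrow\neg B$. A safety problem $\langle \mathit{Init}(X),\mathit{Tr}(X,X'),\mathit{Bad}(X)\rangle$ has a finite set $X$ of constants disjoint from $\mathit{SK}$, primed copy $X'=\{a'\mid a\in X\}$, and quantifier-free ground $\mathit{Init},\mathit{Bad}$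 over $X$ and $\mathit{Tr}$ over $X\cup X'$. $\varphi'$ replaces each $a\in X$ by $a'$ in $\varphi$, and for $L'$ a formula over $X'\cup\mathit{SK}$, $L$ denotes its unprimed version. $\mathcal{F}(A)=(A(X)\wedge\mathit{Tr}(X,X'))\vee\mathit{Init}(X')$. A frame $Q$ is a finite set of pairs $(\ell,\sigma)$, $\ell$ quantifier-free over $X$ with free variables of sort $\mathsf{int}$, $\sigma$ a substitution with $\mathit{FVars}(\ell)\subseteq\mathit{dom}(\sigma)$ and range in $X'\cup\mathit{SK}$; $\forall Q$ is the conjunction of $\forall\ell$ and $\mathit{qi}(Q)$ the conjunction of $\ell\sigma$ over $(\ell,\sigma)\in Q$. A proof obligation (POB) is $\langle m,\sigma,i\rangle$ with $m$ a conjunction of literals over $X$ with free $\mathsf{int}$ variables, $m\sigma$ ground, $i\in\mathbb N$. Quic3 maintains a POB queue $\mathcal Q$, a level $N$ and frames $Q_0,Q_1,\dots$; initially $\mathcal Q=\emptyset$, $N=0$, $Q_0=\{(\mathit{Init},\emptyset)\}$, $Q_i=\emptyset$ for $i>0$. It applies, in any order, the rules: (Safe) if some $i<N$ has $\forall Q_i\subseteq\forall Q_{i+1}$ (as sets of formulas), return Safe; (Cex) if some $\langle m,\sigma,0\rangle\in\mathcal Q$, return Cex; (Unfold) if $\mathit{qi}(Q_N)\Rightarrow\neg\mathit{Bad}$, set $N\gets N+1$; (Candidate) if $m$ is a monomial with $m\Rightarrow\mathit{qi}(Q_N)\wedge\mathit{Bad}$, add $\langle m,\emptyset,N\rangle$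 to $\mathcal Q$; (Predecessor) if $\langle m,\xi,i+1\rangle\in\mathcal Q$ and $M\models\mathit{qi}(Q_i)\wedge\mathit{Tr}\wedge m'_{\mathit{sk}}$, add $\langle\psi,\sigma,i\rangle$ where $(\psi,\sigma)=\mathit{abs}(U,\varphi)$ and $(\varphi,U)=\textsc{pMbp}(X'\cup\mathit{SK},\mathit{Tr}\wedge m'_{\mathit{sk}},M)$; (NewLemma) for $0\le i<N$ and $\langle m,\sigma,i+1\rangle\in\mathcal Q$ with $\mathcal F(\mathit{qi}(Q_i))\wedge m'_{\mathit{sk}}$ unsatisfiable, let $L'=\textsc{Itp}(\mathcal F(\mathit{qi}(Q_i)),m'_{\mathit{sk}})$ and $(\ell,\_)=\mathit{abs}(\mathit{SK},L)$, and add $(\ell,\sigma)$ to $Q_j$ for all $j\le i+1$; (Push) for $0\le i<N$ and $((\varphi\vee\psi),\sigma)\in Q_i$, if $(\varphi,\sigma)\notin Q_{i+1}$, $\mathit{Init}\Rightarrow\forall\varphi$ and $(\forall\varphi)\wedge\forall Q_i\wedge\mathit{qi}(Q_i)\wedge\mathit{Tr}\Rightarrow\forall\varphi'$, add $(\varphi,\sigma)$ to $Q_j$ for all $j\le i+1$. *)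

From Stdlib Require Import ZArith List Bool Arith.
Import ListNotations.
Open Scope Z_scope.

(* Every non-Skolem constant has a name n and a
   "primed" flag; the primed copy a' of an unprimed constant a is obtained by
   flipping the flag.  Skolem constants sk_i have sort int.                  *)
Inductive const : Type :=
| CInt (n : nat) (pr : bool)
| CArr (n : nat) (pr : bool)
| CSk  (i : nat).

Definition const_eq_dec : forall c d : const, {c = d} + {c <> d}.
Proof. decide equality; first [apply Nat.eq_dec | apply Bool.bool_dec]. Defined.

Definition isSk (c : const) : Prop := exists i, c = CSk i.

(* Terms (sort-correct by construction). Variables v_i are of sort int. *)
Inductive iterm : Type :=
| IVar (v : nat)
| ICst (n : nat) (pr : bool)
| ISk  (i : nat)
| ILit (z : Z)
| IAdd (t u : iterm)
| IMul (k : Z) (t : iterm)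
| ISel (a : aterm) (t : iterm)
with aterm : Type :=
| ACst (n : nat) (pr : bool)
| AStore (a : aterm) (t u : iterm).

Inductive formula : Type :=
| FTrue | FFalse
| FEq  (t u : iterm)
| FLe  (t u : iterm)
| FDvd (k : Z) (t : iterm)
| FEqA (a b : aterm)
| FNot (p : formula)
| FAnd (p q : formula)
| FOr  (p q : formula)
| FAll (v : nat) (p : formula)
| FEx  (v : nat) (p : formula).

Record model : Type := mkModel {
  m_int : nat -> bool -> Z;
  m_arr : nat -> bool -> Z -> Z;
  m_sk  : nat -> Z }.

Definition valuation := nat -> Z.
Definition upd (r : valuation) (v : nat) (z : Z) : valuation :=
  fun w => if Nat.eqb w v then z else r w.

Fixpoint evalI (M : model) (r : valuation) (t : iterm) : Z :=
  match t with
  | IVar v => r v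
  | ICst n pr => m_int M n pr
  | ISk i => m_sk M i
  | ILit z => z
  | IAdd t u => evalI M r t + evalI M r u
  | IMul k t => k * evalI M r t
  | ISel a t => evalA M r a (evalI M r t)
  end
with evalA (M : model) (r : valuation) (a : aterm) : Z -> Z :=
  match a with
  | ACst n pr => m_arr M n pr
  | AStore a t u => fun j => if Z.eqb j (evalI M r t) then evalI M r u
                            else evalA M r a j
  end.

Fixpoint sat (M : model) (r : valuation) (p : formula) : Prop :=
  match p with
  | FTrue => True
  | FFalse => False
  | FEq t u => evalI M r t = evalI M r u
  | FLe t u => evalI M r t <= evalI M r u
  | FDvd k t => (k | evalI M r t)
  | FEqA a b => forall j, evalA M r a j = evalA M r b j
  | FNot p => ~ sat M r p
  | FAnd p q => sat M r p /\ sat M r q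
  | FOr p q => sat M r p \/ sat M r q
  | FAll v p => forall z, sat M (upd r v z) p
  | FEx v p => exists z, sat M (upd r v z) p
  end.

Definition models (M : model) (p : formula) : Prop := forall r, sat M r p.
Definition entails (p q : formula) : Prop :=
  forall M r, sat M r p -> sat M r q.
Definition unsat (p : formula) : Prop := forall M r, ~ sat M r p.

Fixpoint fvI (t : iterm) : list nat :=
  match t with
  | IVar v => [v]
  | ICst _ _ | ISk _ | ILit _ => []
  | IAdd t u => fvI t ++ fvI u
  | IMul _ t => fvI t
  | ISel a t => fvA a ++ fvI t
  end
with fvA (a : aterm) : list nat :=
  match a with
  | ACst _ _ => []
  | AStore a t u => fvA a ++ fvI t ++ fvI u
  end.

Fixpoint fvars (p : formula) : list nat :=
  match p with
  | FTrue | FFalse => []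
  | FEq t u | FLe t u => fvI t ++ fvI u
  | FDvd _ t => fvI t
  | FEqA a b => fvA a ++ fvA b
  | FNot p => fvars p
  | FAnd p q | FOr p q => fvars p ++ fvars q
  | FAll v p | FEx v p => filter (fun w => negb (Nat.eqb w v)) (fvars p)
  end.

Fixpoint cI (t : iterm) : list const :=
  match t with
  | IVar _ | ILit _ => []
  | ICst n pr => [CInt n pr]
  | ISk i => [CSk i]
  | IAdd t u => cI t ++ cI u
  | IMul _ t => cI t
  | ISel a t => cA a ++ cI t
  end
with cA (a : aterm) : list const :=
  match a with
  | ACst n pr => [CArr n pr]
  | AStore a t u => cA a ++ cI t ++ cI u
  end.

Fixpoint consts (p : formula) : list const :=
  match p with
  | FTrue | FFalse => []
  | FEq t u | FLe t u => cI t ++ cI u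
  | FDvd _ t => cI t
  | FEqA a b => cA a ++ cA b
  | FNot p => consts p
  | FAnd p q | FOr p q => consts p ++ consts q
  | FAll _ p | FEx _ p => consts p
  end.

Fixpoint qfree (p : formula) : Prop :=
  match p with
  | FNot p => qfree p
  | FAnd p q | FOr p q => qfree p /\ qfree q
  | FAll _ _ | FEx _ _ => False
  | _ => True
  end.

Definition ground (p : formula) : Prop := qfree p /\ fvars p = [].

Definition is_atom (p : formula) : Prop :=
  match p with
  | FTrue | FFalse | FEq _ _ | FLe _ _ | FDvd _ _ | FEqA _ _ => True
  | _ => False
  end.
Definition is_literal (p : formula) : Prop :=
  is_atom p \/ exists a, p = FNot a /\ is_atom a.
Fixpoint conj_lits (p : formula) : Prop :=
  match p with
  | FAnd p q => conj_lits p /\ conj_lits q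
  | p => is_literal p
  end.

Definition subst := nat -> option iterm.
Definition empty_subst : subst := fun _ => None.
Definition sk_subst : subst := fun v => Some (ISk v).

Fixpoint substI (s : subst) (t : iterm) : iterm :=
  match t with
  | IVar v => match s v with Some u => u | None => IVar v end
  | ICst _ _ | ISk _ | ILit _ => t
  | IAdd t u => IAdd (substI s t) (substI s u)
  | IMul k t => IMul k (substI s t)
  | ISel a t => ISel (substA s a) (substI s t)
  end
with substA (s : subst) (a : aterm) : aterm :=
  match a with
  | ACst _ _ => a
  | AStore a t u => AStore (substA s a) (substI s t) (substI s u)
  end.

Definition subst_rm (s : subst) (v : nat) : subst :=
  fun w => if Nat.eqb w v then None else s w.

Fixpoint substF (s : subst) (p : formula) : formula :=
  match p with
  | FTrue => FTrue | FFalse => FFalse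
  | FEq t u => FEq (substI s t) (substI s u)
  | FLe t u => FLe (substI s t) (substI s u)
  | FDvd k t => FDvd k (substI s t)
  | FEqA a b => FEqA (substA s a) (substA s b)
  | FNot p => FNot (substF s p)
  | FAnd p q => FAnd (substF s p) (substF s q)
  | FOr p q => FOr (substF s p) (substF s q)
  | FAll v p => FAll v (substF (subst_rm s v) p)
  | FEx v p => FEx v (substF (subst_rm s v) p)
  end.

Fixpoint mapcI (fi fa : nat -> bool -> bool) (t : iterm) : iterm :=
  match t with
  | ICst n pr => ICst n (fi n pr)
  | IVar _ | ISk _ | ILit _ => t
  | IAdd t u => IAdd (mapcI fi fa t) (mapcI fi fa u)
  | IMul k t => IMul k (mapcI fi fa t)
  | ISel a t => ISel (mapcA fi fa a) (mapcI fi fa t)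
  end
with mapcA (fi fa : nat -> bool -> bool) (a : aterm) : aterm :=
  match a with
  | ACst n pr => ACst n (fa n pr)
  | AStore a t u => AStore (mapcA fi fa a) (mapcI fi fa t) (mapcI fi fa u)
  end.

Fixpoint mapcF (fi fa : nat -> bool -> bool) (p : formula) : formula :=
  match p with
  | FTrue => FTrue | FFalse => FFalse
  | FEq t u => FEq (mapcI fi fa t) (mapcI fi fa u)
  | FLe t u => FLe (mapcI fi fa t) (mapcI fi fa u)
  | FDvd k t => FDvd k (mapcI fi fa t)
  | FEqA a b => FEqA (mapcA fi fa a) (mapcA fi fa b)
  | FNot p => FNot (mapcF fi fa p)
  | FAnd p q => FAnd (mapcF fi fa p) (mapcF fi fa q)
  | FOr p q => FOr (mapcF fi fa p) (mapcF fi fa q)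
  | FAll v p => FAll v (mapcF fi fa p)
  | FEx v p => FEx v (mapcF fi fa p)
  end.

Definition inX (X : list const) (c : const) : bool :=
  if in_dec const_eq_dec c X then true else false.

(* phi' : replace each a in X by a' *)
Definition primeF (X : list const) (p : formula) : formula :=
  mapcF (fun n pr => if (negb pr) && inX X (CInt n false) then true else pr)
        (fun n pr => if (negb pr) && inX X (CArr n false) then true else pr) p.
(* L from L' : replace each a' (a in X) by a *)
Definition unprimeF (X : list const) (p : formula) : formula :=
  mapcF (fun n pr => if pr && inX X (CInt n false) then false else pr)
        (fun n pr => if pr && inX X (CArr n false) then false else pr) p.

Definition prime_c (c : const) : const :=
  match c with
  | CInt n _ => CInt n true
  | CArr n _ => CArr n true
  | CSk i => CSk i
  end.

Definition skF (p : formula) : formula := substF sk_subst p.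
Definition msk (X : list const) (m : formula) : formula := skF (primeF X m).

Fixpoint renI (U : const -> Prop) (dU : forall c, {U c} + {~ U c})
         (ren : const -> nat) (t : iterm) : iterm :=
  match t with
  | ICst n pr => if dU (CInt n pr) then IVar (ren (CInt n pr)) else t
  | ISk i => if dU (CSk i) then IVar (ren (CSk i)) else t
  | IVar _ | ILit _ => t
  | IAdd t u => IAdd (renI U dU ren t) (renI U dU ren u)
  | IMul k t => IMul k (renI U dU ren t)
  | ISel a t => ISel (renA U dU ren a) (renI U dU ren t)
  end
with renA (U : const -> Prop) (dU : forall c, {U c} + {~ U c})
         (ren : const -> nat) (a : aterm) : aterm :=
  match a with
  | ACst _ _ => a
  | AStore a t u => AStore (renA U dU ren a) (renI U dU ren t) (renI U dU ren u)
  end.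

Fixpoint renF (U : const -> Prop) (dU : forall c, {U c} + {~ U c})
         (ren : const -> nat) (p : formula) : formula :=
  match p with
  | FTrue => FTrue | FFalse => FFalse
  | FEq t u => FEq (renI U dU ren t) (renI U dU ren u)
  | FLe t u => FLe (renI U dU ren t) (renI U dU ren u)
  | FDvd k t => FDvd k (renI U dU ren t)
  | FEqA a b => FEqA (renA U dU ren a) (renA U dU ren b)
  | FNot p => FNot (renF U dU ren p)
  | FAnd p q => FAnd (renF U dU ren p) (renF U dU ren q)
  | FOr p q => FOr (renF U dU ren p) (renF U dU ren q)
  | FAll v p => FAll v (renF U dU ren p)
  | FEx v p => FEx v (renF U dU ren p)
  end.

(* abs(U, p) = (psi, s), as a specification (relation). *)
Definition is_abs (U : const -> Prop) (p psi : formula) (s : subst) : Prop :=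
  exists (dU : forall c, {U c} + {~ U c}) (ren : const -> nat),
    (forall i, U (CSk i) -> ren (CSk i) = i) /\
    (forall c, U c -> ~ In (ren c) (fvars p)) /\
    psi = renF U dU ren p /\
    (forall v, (exists t, s v = Some t) <-> (In v (fvars psi) /\ ~ In v (fvars p))) /\
    substF s psi = p /\
    (forall c, U c -> ~ In c (consts psi)).

Definition close (p : formula) : formula :=
  fold_right (fun v acc => FAll v acc) p (fvars p).

Definition bigand (l : list formula) : formula := fold_right FAnd FTrue l.

Definition is_itp (A B I : formula) : Prop :=
  ground A /\ ground B /\ ground I /\
  (forall c, In c (consts I) -> In c (consts A) /\ In c (consts B)) /\
  entails A I /\ entails I (FNot B).

Definition agree_except (V : const -> Prop) (M1 M2 : model) : Prop :=
  (forall n pr, ~ V (CInt n pr) -> m_int M1 n pr = m_int M2 n pr) /\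
  (forall n pr, ~ V (CArr n pr) -> m_arr M1 n pr = m_arr M2 n pr) /\
  (forall i, ~ V (CSk i) -> m_sk M1 i = m_sk M2 i).

Definition entails_ex (psi : formula) (V : const -> Prop) (p : formula) : Prop :=
  forall M r, sat M r psi -> exists M', agree_except V M M' /\ models M' p.

(* (psi, W) is a possible value of pMbp(U, p, M) *)
Definition is_pmbp (U : const -> Prop) (p : formula) (M : model)
           (psi : formula) (W : list const) : Prop :=
  ground p /\ models M p /\
  conj_lits psi /\ ground psi /\
  (forall c, In c W -> U c) /\
  (forall c, In c (consts psi) -> In c (consts p) /\ (U c -> In c W)) /\
  entails_ex psi (fun c => U c /\ ~ In c W) p /\
  models M psi /\
  (forall n pr, ~ In (CArr n pr) W).

Definition XP (X : list const) (c : const) : Prop := In c X \/ In c (map prime_c X).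

Definition safety_problem (X : list const) (Init Tr Bad : formula) : Prop :=
  (forall c, In c X -> (exists n, c = CInt n false) \/ (exists n, c = CArr n false)) /\
  ground Init /\ (forall c, In c (consts Init) -> In c X) /\
  ground Bad /\ (forall c, In c (consts Bad) -> In c X) /\
  ground Tr /\ (forall c, In c (consts Tr) -> XP X c).

Definition Fop (X : list const) (Init Tr A : formula) : formula :=
  FOr (FAnd A Tr) (primeF X Init).

Definition frame := list (formula * subst).
Definition allQ (Q : frame) : formula := bigand (map (fun p => close (fst p)) Q).
Definition qi (Q : frame) : formula := bigand (map (fun p => substF (snd p) (fst p)) Q).

Definition pob := (formula * subst * nat)%type.

Record state : Type := mkState {
  queue  : list pob;
  lvl    : nat;
  frames : nat -> frame }.

Definition init_state (Init : formula) : state :=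
  mkState [] 0 (fun j => if Nat.eqb j 0 then [(Init, empty_subst)] else []).

Definition add_upto (Fr : nat -> frame) (k : nat) (e : formula * subst) : nat -> frame :=
  fun j => if Nat.leb j k then e :: Fr j else Fr j.

Definition XSK (X : list const) (c : const) : Prop :=
  In c (map prime_c X) \/ isSk c.

(* One application of a Quic3 rule (Safe and Cex terminate the run). *)
Inductive step (X : list const) (Init Tr Bad : formula) : state -> state -> Prop :=
| R_Unfold : forall s,
    entails (qi (frames s (lvl s))) (FNot Bad) ->
    step X Init Tr Bad s (mkState (queue s) (S (lvl s)) (frames s))
| R_Candidate : forall s m,
    conj_lits m -> ground m -> (forall c, In c (consts m) -> In c X) ->
    entails m (FAnd (qi (frames s (lvl s))) Bad) ->
    step X Init Tr Bad s
         (mkState ((m, empty_subst, lvl s) :: queue s) (lvl s) (frames s))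
| R_Predecessor : forall s m xi i M phi W psi sg,
    In (m, xi, S i) (queue s) ->
    models M (FAnd (qi (frames s i)) (FAnd Tr (msk X m))) ->
    is_pmbp (XSK X) (FAnd Tr (msk X m)) M phi W ->
    is_abs (fun c => In c W) phi psi sg ->
    step X Init Tr Bad s
         (mkState ((psi, sg, i) :: queue s) (lvl s) (frames s))
| R_NewLemma : forall s m sg i L' l sg0,
    (i < lvl s)%nat ->
    In (m, sg, S i) (queue s) ->
    unsat (FAnd (Fop X Init Tr (qi (frames s i))) (msk X m)) ->
    is_itp (Fop X Init Tr (qi (frames s i))) (msk X m) L' ->
    is_abs isSk (unprimeF X L') l sg0 ->
    step X Init Tr Bad s
         (mkState (queue s) (lvl s) (add_upto (frames s) (S i) (l, sg)))
| R_Push : forall s i phi psi sg,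
    (i < lvl s)%nat ->
    (In (FOr phi psi, sg) (frames s i) \/ In (FOr psi phi, sg) (frames s i)) ->
    ~ In (phi, sg) (frames s (S i)) ->
    entails Init (close phi) ->
    entails (FAnd (FAnd (close phi) (allQ (frames s i)))
                  (FAnd (qi (frames s i)) Tr))
            (close (primeF X phi)) ->
    step X Init Tr Bad s
         (mkState (queue s) (lvl s) (add_upto (frames s) (S i) (phi, sg))).

Inductive reachable (X : list const) (Init Tr Bad : formula) : state -> Prop :=
| reach_init : reachable X Init Tr Bad (init_state Init)
| reach_step : forall s s', reachable X Init Tr Bad s -> step X Init Tr Bad s s' ->
                            reachable X Init Tr Bad s'.

(* Fix a model M of F(∀Q_i) and a valuation r of the variables, and let M_r be
   M with each Skolem constant sk_i reinterpreted as r(v_i).  Init, Tr and all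
   frame lemmas are free of Skolem constants, so M_r still satisfies F(∀Q_i),
   hence its instance F(qi(Q_i)), hence the interpolant L'.  Truth of L' in M_r
   is truth of ℓ' (the abstraction sk_i ↦ v_i of L, primed again) under r: the
   constants of L' come from m'_sk, so they are primed or lie outside X, and
   unpriming followed by priming leaves them unchanged. *)
From Stdlib Require Import ZArith List.

Scheme iterm_mut := Induction for iterm Sort Prop
  with aterm_mut := Induction for aterm Sort Prop.
Combined Scheme term_mut from iterm_mut, aterm_mut.

Definition mapc_model (fi fa : nat -> bool -> bool) (M : model) : model :=
  mkModel (fun n pr => m_int M n (fi n pr)) (fun n pr => m_arr M n (fa n pr)) (m_sk M).

Definition subst_val (M : model) (r : valuation) (s : subst) : valuation :=
  fun v => match s v with Some u => evalI M r u | None => r v end.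

Definition skolem_model (M : model) (r : valuation) : model :=
  mkModel (m_int M) (m_arr M) r.

Definition agree_on (M1 M2 : model) (c : const) : Prop :=
  match c with
  | CInt n pr => m_int M1 n pr = m_int M2 n pr
  | CArr n pr => forall j, m_arr M1 n pr j = m_arr M2 n pr j
  | CSk i => m_sk M1 i = m_sk M2 i
  end.

Lemma eval_mapc fi fa M r :
  (forall t, evalI M r (mapcI fi fa t) = evalI (mapc_model fi fa M) r t) /\
  (forall a j, evalA M r (mapcA fi fa a) j = evalA (mapc_model fi fa M) r a j).
Proof.
  apply term_mut; intros; simpl; try rewrite H; try rewrite H0; try rewrite H1; reflexivity.
Qed.

Lemma sat_mapcF fi fa M p r :
  sat M r (mapcF fi fa p) <-> sat (mapc_model fi fa M) r p.
Proof.
  pose proof (fun r => eval_mapc fi fa M r) as E.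
  revert r; induction p; intro r; simpl; rewrite ?(proj1 (E r)); try tauto.
  - split; intros H j; specialize (H j); rewrite !(proj2 (E r)) in *; exact H.
  - rewrite IHp; tauto.
  - rewrite IHp1, IHp2; tauto.
  - rewrite IHp1, IHp2; tauto.
  - split; intros H z; apply IHp, H.
  - split; intros [z H]; exists z; apply IHp, H.
Qed.

Lemma eval_substI M r s :
  (forall t, evalI M r (substI s t) = evalI M (subst_val M r s) t) /\
  (forall a j, evalA M r (substA s a) j = evalA M (subst_val M r s) a j).
Proof.
  apply term_mut; intros; simpl; try rewrite H; try rewrite H0; try rewrite H1;
    try reflexivity.
  unfold subst_val; destruct (s v); reflexivity.
Qed.

(* substF is not capture-avoiding, whence the restriction to qfree formulas;
   the same holds for renF below. *)
Lemma sat_substF M s p r :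
  qfree p -> sat M r (substF s p) <-> sat M (subst_val M r s) p.
Proof.
  pose proof (eval_substI M r s) as [EI EA].
  induction p; simpl; intro Hq; rewrite ?EI; try tauto.
  split; intros H j; specialize (H j); rewrite !EA in *; exact H.
Qed.

Lemma eval_renI_isSk M r dU ren :
  (forall i, ren (CSk i) = i) ->
  (forall t, evalI M r (renI isSk dU ren t) = evalI (skolem_model M r) r t) /\
  (forall a j, evalA M r (renA isSk dU ren a) j = evalA (skolem_model M r) r a j).
Proof.
  intro Hren; apply term_mut; intros; simpl; try rewrite H; try rewrite H0; try rewrite H1;
    try reflexivity.
  - destruct (dU (CInt n pr)) as [[k Hk]|]; [discriminate|reflexivity].
  - destruct (dU (CSk i)) as [|Hn]; [simpl; rewrite Hren; reflexivity|].
    exfalso; apply Hn; exists i; reflexivity.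
Qed.

Lemma sat_renF_isSk M dU ren p r :
  (forall i, ren (CSk i) = i) -> qfree p ->
  sat M r (renF isSk dU ren p) <-> sat (skolem_model M r) r p.
Proof.
  intro Hren; pose proof (eval_renI_isSk M r dU ren Hren) as [EI EA].
  induction p; simpl; intro Hq; rewrite ?EI; try tauto.
  split; intros H j; specialize (H j); rewrite !EA in *; exact H.
Qed.

Lemma eval_agree M1 M2 r1 r2 :
  (forall t, (forall c, In c (cI t) -> agree_on M1 M2 c) ->
     (forall v, In v (fvI t) -> r1 v = r2 v) -> evalI M1 r1 t = evalI M2 r2 t) /\
  (forall a, (forall c, In c (cA a) -> agree_on M1 M2 c) ->
     (forall v, In v (fvA a) -> r1 v = r2 v) ->
     forall j, evalA M1 r1 a j = evalA M2 r2 a j).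
Proof.
  apply term_mut; intros; simpl in *.
  all: repeat match goal with Hl : context [In _ (_ ++ _)] |- _ =>
         setoid_rewrite in_app_iff in Hl end.
  - apply H0; left; reflexivity.
  - exact (H _ (or_introl eq_refl)).
  - exact (H _ (or_introl eq_refl)).
  - reflexivity.
  - rewrite H, H0; firstorder.
  - rewrite H; firstorder.
  - rewrite H0, H; firstorder.
  - exact (H _ (or_introl eq_refl) j).
  - rewrite H, H0, H1; firstorder.
Qed.

Lemma sat_agree M1 M2 p :
  (forall c, In c (consts p) -> agree_on M1 M2 c) ->
  forall r1 r2, (forall v, In v (fvars p) -> r1 v = r2 v) ->
  sat M1 r1 p <-> sat M2 r2 p.
Proof.
  pose proof (eval_agree M1 M2) as E.
  induction p; simpl; intros HC r1 r2 HV;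
    repeat setoid_rewrite in_app_iff in HC; repeat setoid_rewrite in_app_iff in HV.
  all: try tauto.
  - rewrite (proj1 (E r1 r2) t), (proj1 (E r1 r2) u) by firstorder; tauto.
  - rewrite (proj1 (E r1 r2) t), (proj1 (E r1 r2) u) by firstorder; tauto.
  - rewrite (proj1 (E r1 r2) t) by firstorder; tauto.
  - split; intros H j; specialize (H j);
      rewrite (proj2 (E r1 r2) a), (proj2 (E r1 r2) b) in * by firstorder; exact H.
  - rewrite (IHp HC r1 r2 HV); tauto.
  - rewrite (IHp1 ltac:(firstorder) r1 r2), (IHp2 ltac:(firstorder) r1 r2) by firstorder; tauto.
  - rewrite (IHp1 ltac:(firstorder) r1 r2), (IHp2 ltac:(firstorder) r1 r2) by firstorder; tauto.
  - assert (Hz : forall z, sat M1 (upd r1 v z) p <-> sat M2 (upd r2 v z) p).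
    { intro z; apply IHp; [exact HC|]. intros w Hw; unfold upd.
      destruct (Nat.eqb w v) eqn:Ew; [reflexivity|].
      apply HV, filter_In; rewrite Ew; auto. }
    split; intros H z; apply Hz, H.
  - assert (Hz : forall z, sat M1 (upd r1 v z) p <-> sat M2 (upd r2 v z) p).
    { intro z; apply IHp; [exact HC|]. intros w Hw; unfold upd.
      destruct (Nat.eqb w v) eqn:Ew; [reflexivity|].
      apply HV, filter_In; rewrite Ew; auto. }
    split; intros [z H]; exists z; apply Hz, H.
Qed.

Lemma agree_on_refl M c : agree_on M M c.
Proof. destruct c; simpl; auto. Qed.

Lemma sat_ground_valuation M p r r' : ground p -> sat M r p -> sat M r' p.
Proof.
  intros [_ Hfv]; apply sat_agree; [intros; apply agree_on_refl|].
  rewrite Hfv; intros _ [].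
Qed.

Lemma sat_fold_all M p vs r r' :
  (forall v, In v (fvars p) -> ~ In v vs -> r v = r' v) ->
  sat M r (fold_right (fun v acc => FAll v acc) p vs) -> sat M r' p.
Proof.
  revert r; induction vs as [|v vs IH]; simpl; intros r Hr H.
  - refine (proj1 (sat_agree M M p _ r r' _) H); [intros; apply agree_on_refl|].
    intros v Hv; apply Hr; auto.
  - apply (IH (upd r v (r' v))); [|apply H].
    intros w Hw Hnw; unfold upd; destruct (Nat.eqb w v) eqn:Ew.
    + apply Nat.eqb_eq in Ew; subst; reflexivity.
    + apply Hr; [exact Hw|]; intros [E|E]; [|exact (Hnw E)].
      subst; rewrite Nat.eqb_refl in Ew; discriminate.
Qed.

Lemma sat_close M p r : sat M r (close p) <-> forall r', sat M r' p.
Proof.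
  split.
  - intros H r'; eapply sat_fold_all; [|exact H]. intros v Hv Hn; tauto.
  - unfold close; generalize (fvars p) as vs.
    intros vs H; revert r; induction vs; simpl; auto.
Qed.

Lemma sat_bigand M r l : sat M r (bigand l) <-> forall f, In f l -> sat M r f.
Proof.
  induction l as [|f l IH]; simpl; [firstorder|].
  rewrite IH; split; [intros [Hf Hl] g [<-|Hg]; auto | auto].
Qed.

Definition mapc_c (fi fa : nat -> bool -> bool) (c : const) : const :=
  match c with
  | CInt n pr => CInt n (fi n pr)
  | CArr n pr => CArr n (fa n pr)
  | CSk i => CSk i
  end.

Lemma consts_mapcF fi fa p c :
  In c (consts (mapcF fi fa p)) -> exists c0, In c0 (consts p) /\ c = mapc_c fi fa c0.
Proof.
  assert (T : (forall t c, In c (cI (mapcI fi fa t)) ->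
                 exists c0, In c0 (cI t) /\ c = mapc_c fi fa c0) /\
              (forall a c, In c (cA (mapcA fi fa a)) ->
                 exists c0, In c0 (cA a) /\ c = mapc_c fi fa c0)).
  { apply term_mut; intros; simpl in *;
      repeat setoid_rewrite in_app_iff; rewrite ?in_app_iff in *; firstorder (subst; eauto). }
  destruct T as [TI TA].
  revert c; induction p; intro c; simpl;
    repeat setoid_rewrite in_app_iff; rewrite ?in_app_iff; firstorder (subst; eauto).
Qed.

Lemma consts_substF (P : const -> Prop) s p :
  (forall v t, s v = Some t -> forall c, In c (cI t) -> P c) ->
  (forall c, In c (consts p) -> P c) -> forall c, In c (consts (substF s p)) -> P c.
Proof.
  assert (T : forall s, (forall v t, s v = Some t -> forall c, In c (cI t) -> P c) ->
    (forall t, (forall c, In c (cI t) -> P c) -> forall c, In c (cI (substI s t)) -> P c) /\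
    (forall a, (forall c, In c (cA a) -> P c) -> forall c, In c (cA (substA s a)) -> P c)).
  { intros s' Hs'; apply term_mut; intros; simpl in *;
      repeat match goal with Hl : context [In _ (_ ++ _)] |- _ =>
        setoid_rewrite in_app_iff in Hl end;
      try solve [firstorder].
    destruct (s' v) eqn:E; [eapply Hs'; eauto | simpl in *; tauto]. }
  revert s; induction p; intros s Hs Hp; destruct (T s Hs) as [TI TA]; simpl in *;
    repeat setoid_rewrite in_app_iff in Hp; repeat setoid_rewrite in_app_iff;
    try solve [firstorder].
  all: apply IHp; auto; unfold subst_rm; intros w t;
    destruct (Nat.eqb w v); [discriminate | eauto].
Qed.

Lemma qfree_mapcF fi fa p : qfree p -> qfree (mapcF fi fa p).
Proof. induction p; simpl; tauto. Qed.

Lemma qfree_renF U dU ren p : qfree p -> qfree (renF U dU ren p).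
Proof. induction p; simpl; tauto. Qed.

Definition sk_free (p : formula) : Prop := forall c, In c (consts p) -> ~ isSk c.

Lemma sat_skolem_model_sk_free M r' p r :
  sk_free p -> sat (skolem_model M r') r p <-> sat M r p.
Proof.
  intro Hp; apply sat_agree; [|reflexivity].
  intros [n pr|n pr|i] Hc; simpl; auto.
  exfalso; apply (Hp _ Hc); exists i; reflexivity.
Qed.

(* Exactly the constants that primeF renames. *)
Definition unprimed_state (X : list const) (c : const) : bool :=
  match c with
  | CInt n pr => negb pr && inX X (CInt n false)
  | CArr n pr => negb pr && inX X (CArr n false)
  | CSk _ => false
  end.

Lemma consts_msk X m c : In c (consts (msk X m)) -> unprimed_state X c = false.
Proof.
  unfold msk, skF; revert c; apply consts_substF.
  - unfold sk_subst; intros v t E; injection E as <-; intros c [<-|[]]; reflexivity.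
  - intros c Hc; destruct (consts_mapcF _ _ _ _ Hc) as [[n pr|n pr|i] [_ ->]]; simpl;
      try reflexivity; destruct pr, inX; reflexivity.
Qed.

Lemma sat_primeF_unprimeF X M r p :
  (forall c, In c (consts p) -> unprimed_state X c = false) ->
  sat M r (primeF X (unprimeF X p)) <-> sat M r p.
Proof.
  intro Hp; unfold primeF, unprimeF; rewrite !sat_mapcF.
  apply sat_agree; [|reflexivity].
  intros [n pr|n pr|i] Hc; specialize (Hp _ Hc); simpl in *; [| intro j |];
    try destruct pr, inX; simpl in *; congruence.
Qed.

(* mapc_model commutes with skolem_model by conversion. *)
Lemma sat_primeF_abs_isSk X M r L l sg :
  qfree L -> is_abs isSk (unprimeF X L) l sg ->
  sat M r (primeF X l) <-> sat (skolem_model M r) r (primeF X (unprimeF X L)).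
Proof.
  intros HqL (dU & ren & Hren & _ & -> & _).
  assert (Hren' : forall i, ren (CSk i) = i) by (intro i; apply Hren; exists i; reflexivity).
  unfold primeF; rewrite !sat_mapcF, sat_renF_isSk; [reflexivity | exact Hren' |].
  apply qfree_mapcF, HqL.
Qed.

Definition wf_frame (Q : frame) : Prop :=
  forall e, In e Q -> qfree (fst e) /\ sk_free (fst e).

Lemma wf_frame_add_upto Fr k e :
  (forall j, wf_frame (Fr j)) -> qfree (fst e) -> sk_free (fst e) ->
  forall j, wf_frame (add_upto Fr k e j).
Proof.
  intros HFr Hq Hs j e' He'; unfold add_upto in He'.
  destruct (Nat.leb j k); [destruct He' as [<-|He']|]; auto; apply (HFr j _ He').
Qed.

Lemma safety_problem_sk_free X Init Tr Bad :
  safety_problem X Init Tr Bad -> sk_free Init /\ sk_free Tr.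
Proof.
  intros (HX & _ & HInit & _ & _ & _ & HTr).
  assert (HXsk : forall c, In c X -> ~ isSk c).
  { intros c Hc [i ->]; destruct (HX _ Hc) as [[n E]|[n E]]; discriminate. }
  split; [intros c Hc; apply HXsk, HInit, Hc|].
  intros c Hc; destruct (HTr _ Hc) as [HcX|HcX]; [apply HXsk, HcX|].
  apply in_map_iff in HcX; destruct HcX as [[n pr|n pr|i] [<- Hx]]; simpl;
    try (intros [k E]; discriminate).
  apply HXsk, Hx.
Qed.

Lemma reachable_wf_frame X Init Tr Bad s :
  safety_problem X Init Tr Bad -> reachable X Init Tr Bad s ->
  forall j, wf_frame (frames s j).
Proof.
  intros HP HR; induction HR as [|s s' _ IH Hstep].
  - pose proof (safety_problem_sk_free _ _ _ _ HP) as [HInit _].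
    destruct HP as (_ & [HqI _] & _).
    intros j e He; simpl in He; destruct (Nat.eqb j 0); [|destruct He].
    destruct He as [<-|[]]; split; assumption.
  - destruct Hstep as [| | | s m sg i L' l sg0 _ _ _ Hitp Habs | s i phi psi sg _ Hin _ _ _];
      simpl; auto; apply wf_frame_add_upto; auto.
    + destruct Hitp as (_ & _ & [HqL _] & _).
      destruct Habs as (dU & ren & _ & _ & -> & _).
      apply qfree_renF, qfree_mapcF, HqL.
    + destruct Habs as (_ & _ & _ & _ & _ & _ & _ & Hsk).
      intros c Hc Hsk'; exact (Hsk c Hsk' Hc).
    + destruct Hin as [Hin|Hin]; apply IH in Hin; simpl in Hin; tauto.
    + destruct Hin as [Hin|Hin]; apply IH in Hin as [_ Hsk]; simpl in Hsk;
        intros c Hc; apply Hsk, in_or_app; auto.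
Qed.

Lemma sat_qi_skolem_model Q M r r' r'' :
  wf_frame Q -> sat M r (allQ Q) -> sat (skolem_model M r') r'' (qi Q).
Proof.
  intros HQ HA; apply sat_bigand; intros f Hf.
  apply in_map_iff in Hf; destruct Hf as [[l sg] [<- Hin]]; simpl.
  destruct (HQ _ Hin) as [Hq Hsk]; simpl in Hq, Hsk.
  apply sat_substF, sat_skolem_model_sk_free; [exact Hq | exact Hsk |].
  refine (proj1 (sat_close M l r) _ _).
  apply (proj1 (sat_bigand M r _) HA), in_map_iff; exists (l, sg); auto.
Qed.

Lemma sat_Fop_skolem_model X Init Tr Q M r r' r'' :
  ground Init -> ground Tr -> sk_free Init -> sk_free Tr -> wf_frame Q ->
  sat M r (Fop X Init Tr (allQ Q)) -> sat (skolem_model M r') r'' (Fop X Init Tr (qi Q)).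
Proof.
  intros GInit GTr HInit HTr HQ [[HA HT]|HI]; [left; split | right].
  - exact (sat_qi_skolem_model Q M r r' r'' HQ HA).
  - apply sat_skolem_model_sk_free; [exact HTr|].
    exact (sat_ground_valuation M Tr r r'' GTr HT).
  - unfold primeF in *; apply sat_mapcF; apply sat_mapcF in HI.
    exact (proj2 (sat_skolem_model_sk_free (mapc_model _ _ M) r' Init r'' HInit)
                 (sat_ground_valuation _ Init r r'' GInit HI)).
Qed.

Theorem lemma2 (X : list const) (Init Tr Bad : formula) (s : state)
    (m : formula) (sg : subst) (i : nat) (L' l : formula) (sg0 : subst) :
  safety_problem X Init Tr Bad ->
  reachable X Init Tr Bad s ->
  (i < lvl s)%nat ->
  In (m, sg, S i) (queue s) ->
  unsat (FAnd (Fop X Init Tr (qi (frames s i))) (msk X m)) ->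
  is_itp (Fop X Init Tr (qi (frames s i))) (msk X m) L' ->
  is_abs isSk (unprimeF X L') l sg0 ->
  entails (Fop X Init Tr (allQ (frames s i))) (close (primeF X l)).
Proof.
  intros HP HR _ _ _ (_ & _ & [HqL _] & HcL & HAL & _) Habs M r HF.
  pose proof (reachable_wf_frame _ _ _ _ _ HP HR i) as Hwf.
  pose proof (safety_problem_sk_free _ _ _ _ HP) as [HInit HTr].
  destruct HP as (_ & GInit & _ & _ & _ & GTr & _).
  apply sat_close; intro r'.
  apply (sat_primeF_abs_isSk X M r' L' l sg0 HqL Habs).
  apply sat_primeF_unprimeF; [intros c Hc; apply (consts_msk X m), HcL, Hc|].
  apply HAL, (sat_Fop_skolem_model X Init Tr _ M r); assumption.
Qed.
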